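(* Let $P=\mathcal E-i\theta$, with $\theta\in su(N)$, be a rank-one Hermitian projector solving the Euler–Lagrange equations of the $\mathbb CP^{N-1}$ sigma model, and let $\Phi([\theta],\lambda)\in SU(N)$ solve the associated LSP $D_\alpha\Phi=u^\alpha\Phi$, $\alpha=1,2$, where $$u^1=\frac{-2}{1+\lambda}[\theta_1,\theta],\qquad u^2=\frac{-2}{1-\lambda}[\theta_2,\theta].$$ Let $\vec w_C=\big(f(x^1)\theta^j_1+g(x^2)\theta^j_2\big)\partial/\partial\theta^j$ be the generalized vector field associated with a conformal transformation. Then: (i) the $su(N)$-valued immersion function $F=\Phi^{-1}(fu^1+gu^2)\Phi$ has tangent vectors $D_\alpha F=\Phi^{-1}(\mathrm{pr}\,\vec w_Cu^\alpha)\Phi$, $\alpha=1,2$ (i.e. $F$ is the Fokas–Gel'fand immersion function associated with the conformal symmetry); (ii) the infinitesimal deformation $(u^1,u^2,\Phi)\mapsto(u^1,u^2,\Phi)+\epsilon\big(\mathrm{pr}\,\vec w_Cu^1,\ \mathrm{pr}\,\vec w_Cu^2,\ (fu^1+gu^2)\Phi\big)$, where $(fu^1+gu^2)\Phi=\Phi F$, is a symmetry of the Euler–Lagrange equations together with the LSP.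
   Context: $\mathcal E=\mathbb I/N$. Write $\theta=\theta^je_j$ in a basis $e_j$ of $su(N)$; $\theta_1,\theta_2,\theta_{12}$ etc. denote partial derivatives in $x^1,x^2$ and $D_\alpha$ total derivatives, $\lambda$ is the spectral parameter. $P=\mathcal E-i\theta$ being a rank-one Hermitian projector means $P^2=P=P^\dagger$, $\mathrm{rank}\,P=1$. The Euler–Lagrange equations are $[\theta_{12},\theta]=0$, which is equivalent to $D_2u^1-D_1u^2+[u^1,u^2]=0$, the compatibility condition of the LSP. Two settings are considered: Minkowski space, where $x^1=x+t$, $x^2=x-t$, $u^1,u^2\in su(N)$, and $f,g$ are real functions; or Euclidean space, where $x^1=\xi$, $x^2=\bar\xi$ are complex conjugate variables, $(u^1)^\dagger=-u^2$, and $g(x^2)=\overline{f(x^1)}$. The prolongation is $\mathrm{pr}\,\vec w_C=\sum_J D_J(f\theta^j_1+g\theta^j_2)\,\partial/\partial\theta^j_J$. The deformation $(u^1,u^2,\Phi)\mapsto(u^1,u^2,\Phi)+\epsilon(A_1,A_2,\Psi)$ is a symmetry of the E–L equations together with the LSP if $D_2A_1-D_1A_2+[A_1,u^2]+[u^1,A_2]=0$ on solutions, $\Phi^{-1}\Psi\in su(N)$, and $D_\alpha\Psi=u^\alpha\Psi+A_\alpha\Phi$. *)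

From mathcomp Require Import all_boot all_order all_algebra.
From mathcomp Require Import all_classical all_reals all_analysis.
From mathcomp Require Export complex.
Import GRing.Theory Num.Theory numFieldNormedType.Exports.

Set Implicit Arguments.
Unset Strict Implicit.
Unset Printing Implicit Defensive.

Local Open Scope ring_scope.

(* Points of the plane are (a,b) in R x R.
   Minkowski : a = x, b = t, x^1 = a + b, x^2 = a - b.
   Euclidean : x^1 = xi = a + i b, x^2 = conj xi = a - i b.
   In both cases the total derivatives D_1 = d/dx^1, D_2 = d/dx^2 are
     D_1 = (d_a + c d_b)/2,  D_2 = (d_a - c d_b)/2
   with c = 1 (Minkowski) or c = -i (Euclidean, Wirtinger derivatives). *)
Inductive setting := Minkowski | Euclidean.

Section Defs.
Variable R : realType.
Local Notation C := R[i].

Definition pa (h : R -> R -> R) : R -> R -> R :=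
  fun a b => derive1 (fun s => h s b) a.
Definition pb (h : R -> R -> R) : R -> R -> R :=
  fun a b => derive1 (fun t => h a t) b.

Fixpoint iter_partial (w : seq bool) (h : R -> R -> R) : R -> R -> R :=
  match w with
  | [::] => h
  | d :: w' => (if d then pa else pb) (iter_partial w' h)
  end.

Definition smoothR (h : R -> R -> R) : Prop :=
  forall w : seq bool,
    continuous (fun p : R * R => iter_partial w h p.1 p.2) /\
    (forall a b, derivable (fun s => iter_partial w h s b) a 1 /\
                 derivable (fun t => iter_partial w h a t) b 1).

Definition smoothC (h : R -> R -> C) : Prop :=
  smoothR (fun a b => complex.Re (h a b)) /\
  smoothR (fun a b => complex.Im (h a b)).

Definition smoothM (m n : nat) (F : R -> R -> 'M[C]_(m, n)) : Prop :=
  forall i j, smoothC (fun a b => F a b i j).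

Definition paC (h : R -> R -> C) : R -> R -> C := fun a b =>
  Complex (pa (fun a b => complex.Re (h a b)) a b)
          (pa (fun a b => complex.Im (h a b)) a b).
Definition pbC (h : R -> R -> C) : R -> R -> C := fun a b =>
  Complex (pb (fun a b => complex.Re (h a b)) a b)
          (pb (fun a b => complex.Im (h a b)) a b).

Definition paM (m n : nat) (F : R -> R -> 'M[C]_(m, n)) : R -> R -> 'M[C]_(m, n) :=
  fun a b => \matrix_(i, j) paC (fun a b => F a b i j) a b.
Definition pbM (m n : nat) (F : R -> R -> 'M[C]_(m, n)) : R -> R -> 'M[C]_(m, n) :=
  fun a b => \matrix_(i, j) pbC (fun a b => F a b i j) a b.

Definition coef (s : setting) : C :=
  match s with Minkowski => 1 | Euclidean => - 'i end.

Definition D1c (s : setting) (h : R -> R -> C) : R -> R -> C :=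
  fun a b => 2^-1 * (paC h a b + coef s * pbC h a b).
Definition D2c (s : setting) (h : R -> R -> C) : R -> R -> C :=
  fun a b => 2^-1 * (paC h a b - coef s * pbC h a b).
Definition D1 (s : setting) (m n : nat) (F : R -> R -> 'M[C]_(m, n)) :
  R -> R -> 'M[C]_(m, n) :=
  fun a b => 2^-1 *: (paM F a b + coef s *: pbM F a b).
Definition D2 (s : setting) (m n : nat) (F : R -> R -> 'M[C]_(m, n)) :
  R -> R -> 'M[C]_(m, n) :=
  fun a b => 2^-1 *: (paM F a b - coef s *: pbM F a b).

Definition comm (n : nat) (A B : 'M[C]_n) : 'M[C]_n := A *m B - B *m A.
Definition hadj (m n : nat) (A : 'M[C]_(m, n)) : 'M[C]_(n, m) := (map_mx Num.conj A)^T.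

Definition su (n : nat) : pred 'M[C]_n :=
  fun A => (hadj A == - A) && (\tr A == 0).
Definition SU (n : nat) : pred 'M[C]_n :=
  fun U => (hadj U *m U == 1%:M) && (\det U == 1).
Arguments su n : clear implicits.
Arguments SU n : clear implicits.

Definition projP (n : nat) (th : 'M[C]_n) : 'M[C]_n :=
  (n%:R)^-1%:M - 'i *: th.
Definition rank_one_hermitian_projector (n : nat) (P : 'M[C]_n) : Prop :=
  P *m P = P /\ hadj P = P /\ \rank P = 1%N.

Definition u1 (s : setting) (lam : C) (n : nat) (th : R -> R -> 'M[C]_n) :
  R -> R -> 'M[C]_n :=
  fun a b => (-2 / (1 + lam)) *: comm (D1 s th a b) (th a b).
Definition u2 (s : setting) (lam : C) (n : nat) (th : R -> R -> 'M[C]_n) :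
  R -> R -> 'M[C]_n :=
  fun a b => (-2 / (1 - lam)) *: comm (D2 s th a b) (th a b).

(* characteristic of the conformal generalized vector field
   w_C = (f theta_1 + g theta_2) d/d theta *)
Definition charQ (s : setting) (f g : R -> R -> C) (n : nat)
  (th : R -> R -> 'M[C]_n) : R -> R -> 'M[C]_n :=
  fun a b => f a b *: D1 s th a b + g a b *: D2 s th a b.

(* pr w_C applied to the differential functions u^1[theta], u^2[theta]:
   pr w_C = sum_J D_J(Q^j) d/d theta^j_J, and u^1 depends only (bilinearly)
   on theta and theta_1, u^2 on theta and theta_2, so
   pr w_C u^1 = -2/(1+lam) ([D_1 Q, theta] + [theta_1, Q]),
   pr w_C u^2 = -2/(1-lam) ([D_2 Q, theta] + [theta_2, Q]). *)
Definition prwC_u1 (s : setting) (lam : C) (f g : R -> R -> C) (n : nat)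
  (th : R -> R -> 'M[C]_n) : R -> R -> 'M[C]_n :=
  fun a b => (-2 / (1 + lam)) *:
    (comm (D1 s (charQ s f g th) a b) (th a b) +
     comm (D1 s th a b) (charQ s f g th a b)).
Definition prwC_u2 (s : setting) (lam : C) (f g : R -> R -> C) (n : nat)
  (th : R -> R -> 'M[C]_n) : R -> R -> 'M[C]_n :=
  fun a b => (-2 / (1 - lam)) *:
    (comm (D2 s (charQ s f g th) a b) (th a b) +
     comm (D2 s th a b) (charQ s f g th a b)).

Definition fu_gu (s : setting) (lam : C) (f g : R -> R -> C) (n : nat)
  (th : R -> R -> 'M[C]_n) : R -> R -> 'M[C]_n :=
  fun a b => f a b *: u1 s lam th a b + g a b *: u2 s lam th a b.
Definition immersionF (s : setting) (lam : C) (f g : R -> R -> C) (n : nat)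
  (th Phi : R -> R -> 'M[C]_n) : R -> R -> 'M[C]_n :=
  fun a b => invmx (Phi a b) *m fu_gu s lam f g th a b *m Phi a b.

Definition lsp_reality (s : setting) (lam : C) (n : nat)
  (th : R -> R -> 'M[C]_n) : Prop :=
  match s with
  | Minkowski => forall a b, u1 s lam th a b \in su n /\ u2 s lam th a b \in su n
  | Euclidean => forall a b, hadj (u1 s lam th a b) = - u2 s lam th a b
  end.
Definition fg_reality (s : setting) (f g : R -> R -> C) : Prop :=
  match s with
  | Minkowski => forall a b, f a b \is Num.real /\ g a b \is Num.real
  | Euclidean => forall a b, g a b = Num.conj (f a b)
  end.

Definition is_LSP_symmetry (s : setting) (n : nat)
  (U1 U2 Phi A1 A2 Psi : R -> R -> 'M[C]_n) : Prop :=
  (forall a b, D2 s A1 a b - D1 s A2 a b + comm (A1 a b) (U2 a b)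
               + comm (U1 a b) (A2 a b) = 0) /\
  (forall a b, invmx (Phi a b) *m Psi a b \in su n) /\
  (forall a b, D1 s Psi a b = U1 a b *m Psi a b + A1 a b *m Phi a b) /\
  (forall a b, D2 s Psi a b = U2 a b *m Psi a b + A2 a b *m Phi a b).

End Defs.
Arguments su {R} n.
Arguments SU {R} n.

(* The compatibility condition D_2 D_1 Phi = D_1 D_2 Phi of the LSP (Schwarz's
   theorem for the smooth Phi) is the zero-curvature equation
   D_2 u^1 - D_1 u^2 + [u^1, u^2] = 0.  Since D_2 f = D_1 g = 0 and the total
   derivatives of theta commute, pr w_C u^1 = (D_1 f) u^1 + f D_1 u^1 + g D_2 u^1, and
   by zero curvature this is the infinitesimal gauge transformation
   D_1 X + [X, u^1] generated by X = f u^1 + g u^2; likewise for u^2.  Conjugating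
   by the unitary Phi gives D_a (Phi^-1 X Phi) = Phi^-1 (D_a X + [X, u^a]) Phi,
   which is (i); and D_a (X Phi) = u^a X Phi + (D_a X + [X, u^a]) Phi together with
   the Jacobi identity, which makes a gauge variation of a flat connection satisfy
   the linearized zero-curvature equation, gives (ii). *)

From mathcomp Require Import all_boot all_order all_algebra.
From mathcomp Require Import all_classical all_reals all_analysis.
From mathcomp Require Import complex ring lra.
Import Order.TTheory GRing.Theory Num.Theory numFieldNormedType.Exports.

Set Implicit Arguments.
Unset Strict Implicit.
Unset Printing Implicit Defensive.

Local Open Scope ring_scope.

Lemma funext2 (A B T : Type) (F G : A -> B -> T) :
  (forall a b, F a b = G a b) -> F = G.
Proof. by move=> FG; apply: funext => a; apply: funext => b; exact: FG. Qed.

(** * Partial derivatives on the plane *)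

Section RealPartials.
Variable R : realType.
Implicit Types u v h : R -> R -> R.

Definition partial (d : bool) h : R -> R -> R := if d then pa h else pb h.
Definition slice (d : bool) h (a b : R) : R -> R := if d then h^~ b else h a.
Definition coord (d : bool) (a b : R) : R := if d then a else b.

Lemma partialE d h a b : partial d h a b = derive1 (slice d h a b) (coord d a b).
Proof. by case: d. Qed.

Definition partially_derivable h :=
  forall d a b, derivable (slice d h a b) (coord d a b) 1.

Lemma partially_derivable_cst (k : R) : partially_derivable (fun _ _ => k).
Proof. by case=> a b; exact: derivable_cst. Qed.

Lemma partial_cst d (k : R) : partial d (fun _ _ => k) = fun _ _ => 0.
Proof. by apply: funext2 => a b; rewrite partialE; case: d; exact: derive1_cst. Qed.

Section Combinations.
Variables u v : R -> R -> R.
Hypotheses (du : partially_derivable u) (dv : partially_derivable v).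

Lemma partially_derivableN : partially_derivable (fun a b => - u a b).
Proof.
move=> d a b; have -> : slice d (fun a b => - u a b) a b = - slice d u a b by case: d.
exact: derivableN.
Qed.

Lemma partially_derivableD : partially_derivable (fun a b => u a b + v a b).
Proof.
move=> d a b.
have -> : slice d (fun a b => u a b + v a b) a b = slice d u a b + slice d v a b.
  by case: d.
exact: derivableD.
Qed.

Lemma partially_derivableM : partially_derivable (fun a b => u a b * v a b).
Proof.
move=> d a b.
have -> : slice d (fun a b => u a b * v a b) a b = slice d u a b * slice d v a b.
  by case: d.
exact: derivableM.
Qed.

Lemma partialN d : partial d (fun a b => - u a b) = fun a b => - partial d u a b.
Proof.
apply: funext2 => a b; rewrite !partialE !derive1E.
have -> : slice d (fun a b => - u a b) a b = - slice d u a b by case: d.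
exact: deriveN.
Qed.

Lemma partialD d :
  partial d (fun a b => u a b + v a b) = fun a b => partial d u a b + partial d v a b.
Proof.
apply: funext2 => a b; rewrite !partialE !derive1E.
have -> : slice d (fun a b => u a b + v a b) a b = slice d u a b + slice d v a b.
  by case: d.
exact: deriveD.
Qed.

Lemma partialM d : partial d (fun a b => u a b * v a b) =
  fun a b => partial d u a b * v a b + u a b * partial d v a b.
Proof.
apply: funext2 => a b; rewrite !partialE !derive1E.
have -> : slice d (fun a b => u a b * v a b) a b = slice d u a b * slice d v a b.
  by case: d.
rewrite (deriveM (@du d a b) (@dv d a b)).
have -> : slice d u a b (coord d a b) = u a b by case: d.
have -> : slice d v a b (coord d a b) = v a b by case: d.
by rewrite addrC /GRing.scale /= mulrC.
Qed.

End Combinations.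

Lemma smoothR_partially_derivable h : smoothR h -> partially_derivable h.
Proof.
move=> sh d a b; have [_ /(_ a b) [da db]] := sh [::].
by case: d; [exact: da | exact: db].
Qed.

Lemma smoothR_partial d h : smoothR h -> smoothR (partial d h).
Proof.
have iter_rcons w : iter_partial (rcons w d) h = iter_partial w (partial d h).
  by elim: w => [|d' w /= ->] //; case: d.
by move=> sh w; rewrite -iter_rcons; exact: sh.
Qed.

End RealPartials.

(** * Schwarz's theorem *)

Section Schwarz.
Variable R : realType.
Implicit Types h : R -> R -> R.

Lemma continuous2_near (F : R -> R -> R) a b e :
  continuous (fun p : R * R => F p.1 p.2) -> 0 < e ->
  exists2 d, 0 < d &
    forall x y, `|a - x| < d -> `|b - y| < d -> `|F a b - F x y| < e.
Proof.
move=> Fc e0; have [d /= d0 Fd] := (nbhs_ballP _ _).1 (cvg_ball (Fc (a, b)) e0).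
exists d => // x y ax by_; apply: (Fd (x, y)).
by split; rewrite /= -ball_normE.
Qed.

Lemma MVT_shift (f : R -> R) x t : (forall z, derivable f z 1) -> 0 < t ->
  exists2 c, x < c < x + t & f (x + t) - f x = derive1 f c * t.
Proof.
move=> fd t0; have xt : x < x + t by rewrite ltrDl.
have df z : z \in `]x, x + t[ -> is_derive z 1 f (derive1 f z).
  by move=> _; rewrite derive1E; exact: derivableP.
have fc : continuous f.
  by move=> z; exact/differentiable_continuous/derivable1_diffP.
have [c cxt ->] := MVT xt df (continuous_subspaceT fc).
by exists c; [rewrite in_itv /= in cxt | rewrite addrAC subrr add0r].
Qed.

Lemma second_difference h a b t :
  (forall x y, derivable (h^~ y) x 1) -> (forall x y, derivable (pa h x) y 1) ->
  0 < t ->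
  exists x, exists2 y, (a < x < a + t) && (b < y < b + t) &
    h (a + t) (b + t) - h (a + t) b - h a (b + t) + h a b = pb (pa h) x y * t * t.
Proof.
move=> dh dpa t0.
have [x xt Ex] := @MVT_shift (fun s => h s (b + t) - h s b) a t
  (fun z => derivableB (dh z _) (dh z _)) t0.
have [y yt Ey] := MVT_shift b (dpa x) t0.
exists x, y; first by rewrite xt yt.
move: Ex; rewrite derive1E deriveB // -!derive1E -/(pa h x (b + t)) -/(pa h x b) Ey.
by move=> <-; rewrite /pb; ring.
Qed.

Lemma smoothR_mixed_partials_near h a b (e : R) : smoothR h -> 0 < e ->
  `|pa (pb h) a b - pb (pa h) a b| < e.
Proof.
move=> sh e0.
have [c_papb _] := sh [:: true; false]; have [c_pbpa _] := sh [:: false; true].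
have [_ d0] := sh [::]; have [_ da] := sh [:: true]; have [_ db] := sh [:: false].
have e20 : 0 < e / 2 by rewrite divr_gt0.
have [d1 d10 near1] := continuous2_near a b c_pbpa e20.
have [d2 d20 near2] := continuous2_near a b c_papb e20.
have [t [t0 td1 td2]] : exists t : R, [/\ 0 < t, t < d1 & t < d2].
  exists (Num.min d1 d2 / 2); rewrite divr_gt0 ?lt_min ?d10 //.
  have m1 : Num.min d1 d2 <= d1 by rewrite ge_min lexx.
  have m2 : Num.min d1 d2 <= d2 by rewrite ge_min lexx orbT.
  by split; lra.
have close d x y : a < x < a + t -> b < y < b + t -> t < d ->
    `|a - x| < d /\ `|b - y| < d.
  by move=> /andP[ax xa] /andP[yb yb'] td; rewrite !ltr0_norm; lra.
have [x [y /andP[xt yt] E]] := @second_difference h a b t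
  (fun x y => (d0 x y).1) (fun x y => (da x y).2) t0.
(* the same second difference, with the roles of the two variables swapped *)
have [y' [x' /andP[yt' xt'] E']] := @second_difference (fun x y => h y x) b a t
  (fun x y => (d0 y x).2) (fun x y => (db y x).1) t0.
have {}E' : h (a + t) (b + t) - h a (b + t) - h (a + t) b + h a b =
  pa (pb h) x' y' * t * t := E'.
have [ax by_] := close d1 x y xt yt td1; have [ax' by'] := close d2 x' y' xt' yt' td2.
have := near1 x y ax by_; have := near2 x' y' ax' by'; rewrite /=.
(* generalize the derivatives, which are expensive to unfold *)
move: (pa (pb h) a b) (pa (pb h) x' y') (pb (pa h) a b) (pb (pa h) x y) E E'.
move=> p p' q q' E E' near_p near_q.
have tt0 : t * t != 0 by rewrite mulf_neq0 // lt0r_neq0.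
have q'p' : q' = p' by apply: (mulIf tt0); rewrite /= !mulrA -E -E'; ring.
rewrite (_ : p - q = (p - p') + (q' - q)); last by rewrite q'p'; ring.
by apply: le_lt_trans (ler_normD _ _) _; rewrite [`|q' - q|]distrC; lra.
Qed.

Lemma smoothR_pa_pb h : smoothR h -> pa (pb h) = pb (pa h).
Proof.
move=> sh; apply: funext2 => a b; apply/eqP.
rewrite -subr_eq0 -normr_eq0 eq_le normr_ge0 andbT.
apply/ler_addgt0Pr => e e0; rewrite add0r; apply: ltW.
exact: smoothR_mixed_partials_near.
Qed.

End Schwarz.

Section Regular.
Variable R : realType.
Implicit Types u v h : R -> R -> R.

(* [smoothR] is not known to be closed under products; this weaker property is,
   and it is all that the computations below use. *)
Definition regular h := [/\ partially_derivable h,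
  forall d, partially_derivable (partial d h) &
  partial true (partial false h) = partial false (partial true h)].

Lemma smoothR_regular h : smoothR h -> regular h.
Proof.
move=> sh; split; first exact: smoothR_partially_derivable.
  by move=> d; apply/smoothR_partially_derivable/smoothR_partial.
exact: smoothR_pa_pb.
Qed.

Lemma regular_cst (k : R) : regular (fun _ _ => k).
Proof.
split; [exact: partially_derivable_cst | move=> d | by rewrite !partial_cst].
by rewrite partial_cst; exact: partially_derivable_cst.
Qed.

Lemma regularN u : regular u -> regular (fun a b => - u a b).
Proof.
case=> du du' cu; split; first exact: partially_derivableN.
  by move=> d; rewrite (partialN du); exact: partially_derivableN (du' d).
by rewrite (partialN du true) (partialN du false) (partialN (du' true))
  (partialN (du' false)) cu.
Qed.

Lemma regularD u v : regular u -> regular v -> regular (fun a b => u a b + v a b).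
Proof.
case=> du du' cu [dv dv' cv]; split; first exact: partially_derivableD.
  by move=> d; rewrite (partialD du dv); exact: partially_derivableD (du' d) (dv' d).
by rewrite (partialD du dv true) (partialD du dv false) (partialD (du' true) (dv' true))
  (partialD (du' false) (dv' false)) cu cv.
Qed.

Lemma regularM u v : regular u -> regular v -> regular (fun a b => u a b * v a b).
Proof.
case=> du du' cu [dv dv' cv].
have duv d : partially_derivable (partial d (fun a b => u a b * v a b)).
  rewrite (partialM du dv); apply: partially_derivableD.
    exact: partially_derivableM (du' d) dv.
  exact: partially_derivableM du (dv' d).
split; [exact: partially_derivableM du dv | exact: duv |].
have Dd d d' : partial d (partial d' (fun a b => u a b * v a b)) =
  fun a b => partial d (partial d' u) a b * v a b + partial d' u a b * partial d v a b
           + (partial d u a b * partial d' v a b + u a b * partial d (partial d' v) a b).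
  rewrite (partialM du dv) (partialD (partially_derivableM (du' d') dv)
    (partially_derivableM du (dv' d'))).
  by rewrite (partialM (du' d') dv) (partialM du (dv' d')).
by rewrite [LHS]Dd [RHS]Dd cu cv; apply: funext2 => a b; rewrite addrACA.
Qed.

End Regular.

Section ComplexPartials.
Variable R : realType.
Local Notation C := R[i].
Implicit Types h k : R -> R -> C.

Definition ReF h : R -> R -> R := fun a b => complex.Re (h a b).
Definition ImF h : R -> R -> R := fun a b => complex.Im (h a b).

Definition partialC d h : R -> R -> C :=
  fun a b => Complex (partial d (ReF h) a b) (partial d (ImF h) a b).

Definition derivableC h := partially_derivable (ReF h) /\ partially_derivable (ImF h).
Definition regularC h := regular (ReF h) /\ regular (ImF h).

Lemma complexP (x y : C) :
  complex.Re x = complex.Re y -> complex.Im x = complex.Im y -> x = y.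
Proof. by case: x; case: y => ? ? ? ? /= -> ->. Qed.

Lemma ReD (x y : C) : complex.Re (x + y) = complex.Re x + complex.Re y.
Proof. by case: x; case: y. Qed.
Lemma ImD (x y : C) : complex.Im (x + y) = complex.Im x + complex.Im y.
Proof. by case: x; case: y. Qed.
Lemma ReM (x y : C) :
  complex.Re (x * y) = complex.Re x * complex.Re y - complex.Im x * complex.Im y.
Proof. by case: x; case: y. Qed.
Lemma ImM (x y : C) :
  complex.Im (x * y) = complex.Re x * complex.Im y + complex.Im x * complex.Re y.
Proof. by case: x; case: y. Qed.

Lemma ReFD h k : ReF (fun a b => h a b + k a b) = fun a b => ReF h a b + ReF k a b.
Proof. by apply: funext2 => a b; rewrite /ReF; case: (h a b); case: (k a b). Qed.
Lemma ImFD h k : ImF (fun a b => h a b + k a b) = fun a b => ImF h a b + ImF k a b.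
Proof. by apply: funext2 => a b; rewrite /ImF; case: (h a b); case: (k a b). Qed.
Lemma ReFN h : ReF (fun a b => - h a b) = fun a b => - ReF h a b.
Proof. by apply: funext2 => a b; rewrite /ReF; case: (h a b). Qed.
Lemma ImFN h : ImF (fun a b => - h a b) = fun a b => - ImF h a b.
Proof. by apply: funext2 => a b; rewrite /ImF; case: (h a b). Qed.
Lemma ReFM h k : ReF (fun a b => h a b * k a b) =
  fun a b => ReF h a b * ReF k a b + - (ImF h a b * ImF k a b).
Proof. by apply: funext2 => a b; rewrite /ReF /ImF; case: (h a b); case: (k a b). Qed.
Lemma ImFM h k : ImF (fun a b => h a b * k a b) =
  fun a b => ReF h a b * ImF k a b + ImF h a b * ReF k a b.
Proof. by apply: funext2 => a b; rewrite /ReF /ImF; case: (h a b); case: (k a b). Qed.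
Lemma ReF_conj h : ReF (fun a b => Num.conj (h a b)) = ReF h.
Proof. by apply: funext2 => a b; rewrite /ReF; case: (h a b). Qed.
Lemma ImF_conj h : ImF (fun a b => Num.conj (h a b)) = fun a b => - ImF h a b.
Proof. by apply: funext2 => a b; rewrite /ImF; case: (h a b). Qed.

Lemma smoothC_regularC h : smoothC h -> regularC h.
Proof.
by case=> sRe sIm; split; [exact: smoothR_regular sRe | exact: smoothR_regular sIm].
Qed.

Lemma smoothC_partialC d h : smoothC h -> smoothC (partialC d h).
Proof.
by case=> sRe sIm; split; [exact: smoothR_partial sRe | exact: smoothR_partial sIm].
Qed.

Lemma regularC_derivableC h : regularC h -> derivableC h.
Proof. by case=> -[? _ _] [? _ _]. Qed.

Lemma regularC_derivableC_partial d h : regularC h -> derivableC (partialC d h).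
Proof. by case=> -[_ dRe _] [_ dIm _]; split; [exact: dRe | exact: dIm]. Qed.

Lemma regularC_partialC_comm h : regularC h ->
  partialC true (partialC false h) = partialC false (partialC true h).
Proof.
case=> -[_ _ cRe] [_ _ cIm]; apply: funext2 => a b.
by apply: complexP; [exact: (congr1 (fun F => F a b) cRe) |
  exact: (congr1 (fun F => F a b) cIm)].
Qed.

Lemma derivableC_cst (k : C) : derivableC (fun _ _ => k).
Proof. by split; exact: partially_derivable_cst. Qed.

Lemma derivableCN h : derivableC h -> derivableC (fun a b => - h a b).
Proof.
case=> dRe dIm; split; [rewrite ReFN; exact: partially_derivableN dRe |
  rewrite ImFN; exact: partially_derivableN dIm].
Qed.

Lemma derivableCD h k : derivableC h -> derivableC k -> derivableC (fun a b => h a b + k a b).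
Proof.
case=> dRh dIh [dRk dIk]; split; [rewrite ReFD; exact: partially_derivableD dRh dRk |
  rewrite ImFD; exact: partially_derivableD dIh dIk].
Qed.

Lemma derivableCM h k : derivableC h -> derivableC k -> derivableC (fun a b => h a b * k a b).
Proof.
case=> dRh dIh [dRk dIk]; split.
  rewrite ReFM; apply: partially_derivableD (partially_derivableM dRh dRk) _.
  exact: partially_derivableN (partially_derivableM dIh dIk).
rewrite ImFM; exact: partially_derivableD (partially_derivableM dRh dIk)
  (partially_derivableM dIh dRk).
Qed.

Lemma regularC_cst (k : C) : regularC (fun _ _ => k).
Proof. by split; exact: regular_cst. Qed.

Lemma regularCN h : regularC h -> regularC (fun a b => - h a b).
Proof.
case=> rRe rIm; split; [rewrite ReFN; exact: regularN rRe |
  rewrite ImFN; exact: regularN rIm].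
Qed.

Lemma regularCD h k : regularC h -> regularC k -> regularC (fun a b => h a b + k a b).
Proof.
case=> rRh rIh [rRk rIk]; split; [rewrite ReFD; exact: regularD rRh rRk |
  rewrite ImFD; exact: regularD rIh rIk].
Qed.

Lemma regularCM h k : regularC h -> regularC k -> regularC (fun a b => h a b * k a b).
Proof.
case=> rRh rIh [rRk rIk]; split.
  by rewrite ReFM; exact: regularD (regularM rRh rRk) (regularN (regularM rIh rIk)).
by rewrite ImFM; exact: regularD (regularM rRh rIk) (regularM rIh rRk).
Qed.

Lemma regularC_conj h : regularC h -> regularC (fun a b => Num.conj (h a b)).
Proof.
by case=> rRe rIm; split; [rewrite ReF_conj | rewrite ImF_conj; exact: regularN rIm].
Qed.

Lemma partialC_cst d (k : C) : partialC d (fun _ _ => k) = fun _ _ => 0.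
Proof. by apply: funext2 => a b; apply: complexP; rewrite /= partial_cst. Qed.

Section Combinations.
Variables h k : R -> R -> C.
Hypotheses (dh : derivableC h) (dk : derivableC k).

Lemma partialCN d : partialC d (fun a b => - h a b) = fun a b => - partialC d h a b.
Proof.
case: dh => ? ?; apply: funext2 => a b.
by apply: complexP; rewrite /= ?ReFN ?ImFN partialN.
Qed.

Lemma partialCD d :
  partialC d (fun a b => h a b + k a b) = fun a b => partialC d h a b + partialC d k a b.
Proof.
case: dh dk => ? ? [? ?]; apply: funext2 => a b.
by apply: complexP; rewrite /= ?ReFD ?ImFD partialD.
Qed.

Lemma partialCM d : partialC d (fun a b => h a b * k a b) =
  fun a b => partialC d h a b * k a b + h a b * partialC d k a b.
Proof.
case: dh dk => dRh dIh [dRk dIk]; apply: funext2 => a b; apply: complexP.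
- rewrite /= ReFM (partialD (partially_derivableM dRh dRk)
    (partially_derivableN (partially_derivableM dIh dIk))).
  rewrite (partialN (partially_derivableM dIh dIk)) (partialM dRh dRk) (partialM dIh dIk).
  by rewrite ReD !ReM /= opprD addrACA.
- rewrite /= ImFM (partialD (partially_derivableM dRh dIk) (partially_derivableM dIh dRk)).
  rewrite (partialM dRh dIk) (partialM dIh dRk).
  by rewrite ImD !ImM /= addrACA.
Qed.

End Combinations.

End ComplexPartials.

Section ComplexSums.
Variable R : realType.
Local Notation C := R[i].
Variables (I : Type) (hs : I -> R -> R -> C).

Lemma sumF_nil : (fun a b => \sum_(i <- [::]) hs i a b) = fun _ _ => 0.
Proof. by apply: funext2 => a b; rewrite big_nil. Qed.

Lemma sumF_cons x r : (fun a b => \sum_(i <- x :: r) hs i a b) =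
  fun a b => hs x a b + \sum_(i <- r) hs i a b.
Proof. by apply: funext2 => a b; rewrite big_cons. Qed.

Lemma derivableC_sum r : (forall i, derivableC (hs i)) ->
  derivableC (fun a b => \sum_(i <- r) hs i a b).
Proof.
move=> dhs; elim: r => [|x r IH]; first by rewrite sumF_nil; exact: derivableC_cst.
by rewrite sumF_cons; exact: derivableCD (dhs x) IH.
Qed.

Lemma regularC_sum r : (forall i, regularC (hs i)) ->
  regularC (fun a b => \sum_(i <- r) hs i a b).
Proof.
move=> rhs; elim: r => [|x r IH]; first by rewrite sumF_nil; exact: regularC_cst.
by rewrite sumF_cons; exact: regularCD (rhs x) IH.
Qed.

Lemma partialC_sum d r : (forall i, derivableC (hs i)) ->
  partialC d (fun a b => \sum_(i <- r) hs i a b) =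
  fun a b => \sum_(i <- r) partialC d (hs i) a b.
Proof.
move=> dhs; elim: r => [|x r IH].
  by rewrite sumF_nil partialC_cst; apply: funext2 => a b; rewrite big_nil.
rewrite sumF_cons (partialCD (dhs x) (derivableC_sum r dhs)) IH.
by apply: funext2 => a b; rewrite big_cons.
Qed.

End ComplexSums.

Section ComplexDerivative.
Variable R : realType.
Local Notation C := R[i].
Implicit Types h k : R -> R -> C.

Definition DDc (e : C) h : R -> R -> C :=
  fun a b => 2^-1 * (partialC true h a b + e * partialC false h a b).

Lemma DDcE e h a b : DDc e h a b = 2^-1 * (partialC true h a b + e * partialC false h a b).
Proof. by []. Qed.

Lemma D1c_DDc s h : D1c s h = DDc (coef R s) h.
Proof. by []. Qed.

Lemma D2c_DDc s h : D2c s h = DDc (- coef R s) h.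
Proof. by apply: funext2 => a b; rewrite /D2c DDcE mulNr. Qed.

Lemma DDc_cst e (k : C) : DDc e (fun _ _ => k) = fun _ _ => 0.
Proof. by apply: funext2 => a b; rewrite DDcE !partialC_cst /= mulr0 addr0 mulr0. Qed.

Lemma DDcD e h k : derivableC h -> derivableC k ->
  DDc e (fun a b => h a b + k a b) = fun a b => DDc e h a b + DDc e k a b.
Proof.
move=> dh dk; apply: funext2 => a b; rewrite !DDcE !(partialCD dh dk).
move: (partialC true h a b) (partialC false h a b) (partialC true k a b)
  (partialC false k a b) => p p' q q'; ring.
Qed.

Lemma DDcN e h : derivableC h -> DDc e (fun a b => - h a b) = fun a b => - DDc e h a b.
Proof.
move=> dh; apply: funext2 => a b; rewrite !DDcE !(partialCN dh).
move: (partialC true h a b) (partialC false h a b) => p p'; ring.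
Qed.

Lemma DDcM e h k : derivableC h -> derivableC k ->
  DDc e (fun a b => h a b * k a b) = fun a b => DDc e h a b * k a b + h a b * DDc e k a b.
Proof.
move=> dh dk; apply: funext2 => a b; rewrite !DDcE !(partialCM dh dk).
move: (partialC true h a b) (partialC false h a b) (partialC true k a b)
  (partialC false k a b) (h a b) (k a b) => p p' q q' x y; ring.
Qed.

Lemma DDc_sum e (I : Type) (r : seq I) (hs : I -> R -> R -> C) :
  (forall i, derivableC (hs i)) ->
  DDc e (fun a b => \sum_(i <- r) hs i a b) = fun a b => \sum_(i <- r) DDc e (hs i) a b.
Proof.
move=> dhs; apply: funext2 => a b.
rewrite DDcE (partialC_sum true r dhs) (partialC_sum false r dhs).
under [RHS]eq_bigr => i _ do rewrite DDcE.
by rewrite -big_distrr big_split -big_distrr.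
Qed.

Lemma partialC_DDc d e h : regularC h ->
  partialC d (DDc e h) = fun a b => 2^-1 *
    (partialC d (partialC true h) a b + e * partialC d (partialC false h) a b).
Proof.
move=> rh; have dT := regularC_derivableC_partial true rh.
have dF := regularC_derivableC_partial false rh.
have deF := derivableCM (derivableC_cst e) dF.
rewrite (partialCM (derivableC_cst 2^-1) (derivableCD dT deF)) partialC_cst.
rewrite (partialCD dT deF) (partialCM (derivableC_cst e) dF) partialC_cst.
by apply: funext2 => a b; rewrite !mul0r !add0r.
Qed.

Lemma DDc_comm e1 e2 h : regularC h -> DDc e1 (DDc e2 h) = DDc e2 (DDc e1 h).
Proof.
move=> rh; apply: funext2 => a b; rewrite !DDcE !partialC_DDc //.
rewrite (regularC_partialC_comm rh).
move: (partialC true (partialC true h) a b) (partialC false (partialC true h) a b)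
  (partialC false (partialC false h) a b) => pTT pFT pFF; ring.
Qed.

Lemma regularC_DDc e h : regularC (partialC true h) -> regularC (partialC false h) ->
  regularC (DDc e h).
Proof.
move=> rT rF; apply: regularCM (regularC_cst _) _.
exact: regularCD rT (regularCM (regularC_cst e) rF).
Qed.

End ComplexDerivative.

(** * Matrix-valued functions and the total derivatives *)

Section MatrixDerivative.
Variable R : realType.
Local Notation C := R[i].
Variable n : nat.
Local Notation M := 'M[C]_n.
Implicit Types (F G : R -> R -> M) (h : R -> R -> C).

Definition entry F (i j : 'I_n) : R -> R -> C := fun a b => F a b i j.
Definition derivableMx F := forall i j, derivableC (entry F i j).
Definition regularMx F := forall i j, regularC (entry F i j).

(* Locked, so that [mxE] does not unfold it. *)
Fact DD_key : unit. Proof. exact: tt. Qed.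
Definition DD : C -> (R -> R -> M) -> R -> R -> M := locked_with DD_key
  (fun e F a b => 2^-1 *: (paM F a b + e *: pbM F a b)).

Lemma DDE e F : DD e F = fun a b => 2^-1 *: (paM F a b + e *: pbM F a b).
Proof. by rewrite /DD locked_withE. Qed.

Lemma D1_DD s F : D1 s F = DD (coef R s) F.
Proof. by rewrite DDE. Qed.

Lemma D2_DD s F : D2 s F = DD (- coef R s) F.
Proof. by rewrite DDE; apply: funext2 => a b; rewrite /D2 scaleNr. Qed.

Lemma DD_entry e F a b i j : DD e F a b i j = DDc e (entry F i j) a b.
Proof. by rewrite DDE !mxE. Qed.

Lemma entry_DD e F i j : entry (DD e F) i j = DDc e (entry F i j).
Proof. by apply: funext2 => a b; exact: DD_entry. Qed.

Lemma entryD F G i j :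
  entry (fun a b => F a b + G a b) i j = fun a b => entry F i j a b + entry G i j a b.
Proof. by apply: funext2 => a b; rewrite /entry mxE. Qed.

Lemma entryN F i j : entry (fun a b => - F a b) i j = fun a b => - entry F i j a b.
Proof. by apply: funext2 => a b; rewrite /entry mxE. Qed.

Lemma entryZ h F i j :
  entry (fun a b => h a b *: F a b) i j = fun a b => h a b * entry F i j a b.
Proof. by apply: funext2 => a b; rewrite /entry mxE. Qed.

Lemma entryM F G i j : entry (fun a b => F a b *m G a b) i j =
  fun a b => \sum_k entry F i k a b * entry G k j a b.
Proof. by apply: funext2 => a b; rewrite /entry mxE. Qed.

Lemma entry_hadj F i j :
  entry (fun a b => hadj (F a b)) i j = fun a b => Num.conj (entry F j i a b).
Proof. by apply: funext2 => a b; rewrite /entry !mxE. Qed.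

Lemma smoothM_regularMx F : smoothM F -> regularMx F.
Proof. by move=> sF i j; exact: smoothC_regularC (sF i j). Qed.

Lemma smoothM_regularMx_DD e F : smoothM F -> regularMx (DD e F).
Proof.
move=> sF i j; rewrite entry_DD.
by apply: regularC_DDc; apply: smoothC_regularC; exact: smoothC_partialC (sF i j).
Qed.

Lemma regularMx_derivableMx F : regularMx F -> derivableMx F.
Proof. by move=> rF i j; exact: regularC_derivableC (rF i j). Qed.

Lemma regularMx_derivableMx_DD e F : regularMx F -> derivableMx (DD e F).
Proof.
move=> rF i j; rewrite entry_DD.
have dT := regularC_derivableC_partial true (rF i j).
have dF := regularC_derivableC_partial false (rF i j).
exact: derivableCM (derivableC_cst _) (derivableCD dT (derivableCM (derivableC_cst e) dF)).
Qed.

Lemma derivableMxN F : derivableMx F -> derivableMx (fun a b => - F a b).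
Proof. by move=> dF i j; rewrite entryN; exact: derivableCN (dF i j). Qed.

Lemma derivableMxD F G : derivableMx F -> derivableMx G ->
  derivableMx (fun a b => F a b + G a b).
Proof. by move=> dF dG i j; rewrite entryD; exact: derivableCD (dF i j) (dG i j). Qed.

Lemma derivableMxZ h F : derivableC h -> derivableMx F ->
  derivableMx (fun a b => h a b *: F a b).
Proof. by move=> dh dF i j; rewrite entryZ; exact: derivableCM dh (dF i j). Qed.

Lemma derivableMxM F G : derivableMx F -> derivableMx G ->
  derivableMx (fun a b => F a b *m G a b).
Proof.
move=> dF dG i j; rewrite entryM; apply: derivableC_sum => k.
exact: derivableCM (dF i k) (dG k j).
Qed.

Lemma derivableMx_comm F G : derivableMx F -> derivableMx G ->
  derivableMx (fun a b => comm (F a b) (G a b)).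
Proof.
move=> dF dG; apply: derivableMxD (derivableMxM dF dG) _.
exact: derivableMxN (derivableMxM dG dF).
Qed.

Lemma regularMxN F : regularMx F -> regularMx (fun a b => - F a b).
Proof. by move=> rF i j; rewrite entryN; exact: regularCN (rF i j). Qed.

Lemma regularMxD F G : regularMx F -> regularMx G -> regularMx (fun a b => F a b + G a b).
Proof. by move=> rF rG i j; rewrite entryD; exact: regularCD (rF i j) (rG i j). Qed.

Lemma regularMxZ h F : regularC h -> regularMx F -> regularMx (fun a b => h a b *: F a b).
Proof. by move=> rh rF i j; rewrite entryZ; exact: regularCM rh (rF i j). Qed.

Lemma regularMxM F G : regularMx F -> regularMx G -> regularMx (fun a b => F a b *m G a b).
Proof.
move=> rF rG i j; rewrite entryM; apply: regularC_sum => k.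
exact: regularCM (rF i k) (rG k j).
Qed.

Lemma regularMx_hadj F : regularMx F -> regularMx (fun a b => hadj (F a b)).
Proof. by move=> rF i j; rewrite entry_hadj; exact: regularC_conj (rF j i). Qed.

Lemma regularMx_comm F G : regularMx F -> regularMx G ->
  regularMx (fun a b => comm (F a b) (G a b)).
Proof.
move=> rF rG; apply: regularMxD (regularMxM rF rG) _.
exact: regularMxN (regularMxM rG rF).
Qed.

Lemma DD_cst e (A : M) : DD e (fun _ _ => A) = fun _ _ => 0.
Proof.
apply: funext2 => a b; apply/matrixP => i j.
by rewrite DD_entry DDc_cst mxE.
Qed.

Lemma DDN e F : derivableMx F -> DD e (fun a b => - F a b) = fun a b => - DD e F a b.
Proof.
move=> dF; apply: funext2 => a b; apply/matrixP => i j.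
by rewrite DD_entry entryN (DDcN e (dF i j)) !mxE DD_entry.
Qed.

Lemma DDD e F G : derivableMx F -> derivableMx G ->
  DD e (fun a b => F a b + G a b) = fun a b => DD e F a b + DD e G a b.
Proof.
move=> dF dG; apply: funext2 => a b; apply/matrixP => i j.
by rewrite DD_entry entryD (DDcD e (dF i j) (dG i j)) mxE !DD_entry.
Qed.

Lemma DDZ e h F : derivableC h -> derivableMx F ->
  DD e (fun a b => h a b *: F a b) = fun a b => DDc e h a b *: F a b + h a b *: DD e F a b.
Proof.
move=> dh dF; apply: funext2 => a b; apply/matrixP => i j.
by rewrite DD_entry entryZ (DDcM e dh (dF i j)) !mxE DD_entry.
Qed.

Lemma DDZc e (k : C) F : derivableMx F ->
  DD e (fun a b => k *: F a b) = fun a b => k *: DD e F a b.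
Proof.
move=> dF; rewrite (DDZ e (derivableC_cst k) dF) DDc_cst.
by apply: funext2 => a b; rewrite scale0r add0r.
Qed.

Lemma DDM e F G : derivableMx F -> derivableMx G ->
  DD e (fun a b => F a b *m G a b) = fun a b => DD e F a b *m G a b + F a b *m DD e G a b.
Proof.
move=> dF dG; apply: funext2 => a b; apply/matrixP => i j.
rewrite DD_entry entryM DDc_sum; last by move=> k; exact: derivableCM (dF i k) (dG k j).
rewrite !mxE -big_split; apply: eq_bigr => k _.
by rewrite (DDcM e (dF i k) (dG k j)) !DD_entry.
Qed.

Lemma DD_comm e1 e2 F : regularMx F -> DD e1 (DD e2 F) = DD e2 (DD e1 F).
Proof.
move=> rF; apply: funext2 => a b; apply/matrixP => i j.
by rewrite !DD_entry !entry_DD (DDc_comm _ _ (rF i j)).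
Qed.

Lemma DD_commutator e F G : derivableMx F -> derivableMx G ->
  DD e (fun a b => comm (F a b) (G a b)) =
  fun a b => comm (DD e F a b) (G a b) + comm (F a b) (DD e G a b).
Proof.
move=> dF dG; rewrite /comm (DDD e (derivableMxM dF dG) (derivableMxN (derivableMxM dG dF))).
rewrite (DDN e (derivableMxM dG dF)) (DDM e dF dG) (DDM e dG dF).
by apply: funext2 => a b; rewrite [RHS]addrACA -opprD [_ *m DD e F a b + _]addrC.
Qed.

End MatrixDerivative.

Section Commutators.
Variable R : realType.
Local Notation C := R[i].
Variable n : nat.
Implicit Types A B D : 'M[C]_n.

Lemma commDl A B D : comm (A + B) D = comm A D + comm B D.
Proof. by rewrite /comm mulmxDl mulmxDr opprD addrACA. Qed.

Lemma commDr A B D : comm D (A + B) = comm D A + comm D B.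
Proof. by rewrite /comm mulmxDl mulmxDr opprD addrACA. Qed.

Lemma commZl (k : C) A B : comm (k *: A) B = k *: comm A B.
Proof. by rewrite /comm -scalemxAl -scalemxAr scalerBr. Qed.

Lemma commZr (k : C) A B : comm A (k *: B) = k *: comm A B.
Proof. by rewrite /comm -scalemxAl -scalemxAr scalerBr. Qed.

Lemma comm_self A : comm A A = 0.
Proof. by rewrite /comm subrr. Qed.

Lemma comm_swap A B : comm B A = - comm A B.
Proof. by rewrite /comm opprB. Qed.

Lemma jacobi A B D : comm A (comm B D) = comm (comm A B) D + comm B (comm A D).
Proof.
rewrite /comm !mulmxBl !mulmxBr !mulmxA.
move: (A *m B *m D) (A *m D *m B) (B *m D *m A) (D *m B *m A)
      (B *m A *m D) (D *m A *m B) => p1 p2 p3 p4 p5 p6.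
by apply/matrixP => i j; rewrite !mxE; ring.
Qed.

Lemma mxtrace_comm A B : \tr (comm A B) = 0.
Proof. by rewrite /comm raddfB /= mxtrace_mulC subrr. Qed.

Lemma unitary_invmx A : hadj A *m A = 1%:M -> invmx A = hadj A.
Proof.
move=> uA; have [_ unitA] := mulmx1_unit uA.
by rewrite -[RHS]mulmx1 -(mulmxV unitA) mulmxA uA mul1mx.
Qed.

End Commutators.

Section Adjoint.
Variable R : realType.
Local Notation C := R[i].
Variables m n p : nat.
Implicit Types A B : 'M[C]_(m, n).

Lemma hadjM A (B : 'M[C]_(n, p)) : hadj (A *m B) = hadj B *m hadj A.
Proof. by rewrite /hadj map_mxM trmx_mul. Qed.

Lemma hadjK A : hadj (hadj A) = A.
Proof. by apply/matrixP => i j; rewrite /hadj !mxE conjCK. Qed.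

Lemma hadjD A B : hadj (A + B) = hadj A + hadj B.
Proof. by apply/matrixP => i j; rewrite /hadj !mxE rmorphD. Qed.

Lemma hadjN A : hadj (- A) = - hadj A.
Proof. by apply/matrixP => i j; rewrite /hadj !mxE rmorphN. Qed.

Lemma hadjZ (k : C) A : hadj (k *: A) = Num.conj k *: hadj A.
Proof. by apply/matrixP => i j; rewrite /hadj !mxE rmorphM. Qed.

End Adjoint.

(** * Zero curvature and gauge variations *)

Section LaxPair.
Variable R : realType.
Local Notation C := R[i].
Variable n : nat.
Local Notation M := 'M[C]_n.
Implicit Types (X U Phi th : R -> R -> M) (f g : R -> R -> C).

Definition zero_curvature (e1 e2 : C) U1 U2 :=
  forall a b, DD e2 U1 a b - DD e1 U2 a b + comm (U1 a b) (U2 a b) = 0.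

Definition gauge_variation (e : C) X U : R -> R -> M :=
  fun a b => DD e X a b + comm (X a b) (U a b).

Definition lax (c e : C) th : R -> R -> M := fun a b => c *: comm (DD e th a b) (th a b).

Definition lax_variation (c e : C) th (Q : R -> R -> M) : R -> R -> M :=
  fun a b => c *: (comm (DD e Q a b) (th a b) + comm (DD e th a b) (Q a b)).

Lemma zero_curvature_sym e1 e2 U1 U2 :
  zero_curvature e1 e2 U1 U2 -> zero_curvature e2 e1 U2 U1.
Proof.
move=> zc a b; rewrite comm_swap; have := zc a b.
move: (DD e2 U1 a b) (DD e1 U2 a b) (comm (U1 a b) (U2 a b)) => p q k zpqk.
by rewrite -[q - p]opprB -opprD zpqk oppr0.
Qed.

Lemma zero_curvature_DD e1 e2 U1 U2 : zero_curvature e1 e2 U1 U2 ->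
  forall a b, DD e1 U2 a b = DD e2 U1 a b + comm (U1 a b) (U2 a b).
Proof. by move=> zc a b; apply/eqP; rewrite eq_sym -subr_eq0 addrAC zc. Qed.

Lemma lsp_zero_curvature e1 e2 U1 U2 Phi :
  regularMx Phi -> derivableMx U1 -> derivableMx U2 ->
  (forall a b, Phi a b \in unitmx) ->
  (forall a b, DD e1 Phi a b = U1 a b *m Phi a b) ->
  (forall a b, DD e2 Phi a b = U2 a b *m Phi a b) ->
  zero_curvature e1 e2 U1 U2.
Proof.
move=> rPhi dU1 dU2 unitPhi lsp1 lsp2 a b.
have := congr1 (fun F => F a b) (DD_comm e2 e1 rPhi).
rewrite (funext2 lsp1) (funext2 lsp2).
rewrite (DDM e2 dU1 (regularMx_derivableMx rPhi)) (DDM e1 dU2 (regularMx_derivableMx rPhi)).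
rewrite /= lsp1 lsp2 !mulmxA -!mulmxDl.
move/(congr1 (mulmx^~ (invmx (Phi a b)))); rewrite -!mulmxA mulmxV // !mulmx1 => E.
by rewrite /comm addrACA -opprD E subrr.
Qed.

Lemma DD_hadj_unitary e U Phi : regularMx Phi ->
  (forall a b, hadj (Phi a b) *m Phi a b = 1%:M) ->
  (forall a b, DD e Phi a b = U a b *m Phi a b) ->
  forall a b, DD e (fun a b => hadj (Phi a b)) a b = - (hadj (Phi a b) *m U a b).
Proof.
move=> rPhi uPhi lsp a b; have [_ unitPhi] := mulmx1_unit (uPhi a b).
have := congr1 (fun F => F a b) (DDM e (regularMx_derivableMx (regularMx_hadj rPhi))
  (regularMx_derivableMx rPhi)).
rewrite (funext2 uPhi) DD_cst /= lsp mulmxA -mulmxDl.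
move/(congr1 (mulmx^~ (invmx (Phi a b)))); rewrite mul0mx -mulmxA mulmxV // mulmx1.
by move/esym/eqP; rewrite addr_eq0 => /eqP.
Qed.

Lemma DD_conj_unitary e X U Phi : derivableMx X -> regularMx Phi ->
  (forall a b, hadj (Phi a b) *m Phi a b = 1%:M) ->
  (forall a b, DD e Phi a b = U a b *m Phi a b) ->
  forall a b, DD e (fun a b => hadj (Phi a b) *m X a b *m Phi a b) a b =
    hadj (Phi a b) *m gauge_variation e X U a b *m Phi a b.
Proof.
move=> dX rPhi uPhi lsp a b.
have dH := regularMx_derivableMx (regularMx_hadj rPhi).
rewrite (DDM e (derivableMxM dH dX) (regularMx_derivableMx rPhi)) (DDM e dH dX) /=.
rewrite lsp (DD_hadj_unitary rPhi uPhi lsp) /gauge_variation /comm.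
rewrite !(mulmxDl, mulmxDr, mulmxBl, mulmxBr, mulNmx, mulmxN, mulmxA).
move: (hadj (Phi a b) *m U a b *m X a b *m Phi a b) (hadj (Phi a b) *m DD e X a b *m Phi a b)
  (hadj (Phi a b) *m X a b *m U a b *m Phi a b) => p q r.
by rewrite addrC addrA addrC.
Qed.

Lemma DD_mulmx_lsp e X U Phi : derivableMx X -> derivableMx Phi ->
  (forall a b, DD e Phi a b = U a b *m Phi a b) ->
  forall a b, DD e (fun a b => X a b *m Phi a b) a b =
    U a b *m (X a b *m Phi a b) + gauge_variation e X U a b *m Phi a b.
Proof.
move=> dX dPhi lsp a b; rewrite (DDM e dX dPhi) /= lsp /gauge_variation /comm.
rewrite !(mulmxDl, mulmxBl, mulNmx, mulmxA).
move: (DD e X a b *m Phi a b) (X a b *m U a b *m Phi a b) (U a b *m X a b *m Phi a b) => p q r.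
by apply/matrixP => i j; rewrite !mxE; ring.
Qed.

Lemma zero_curvature_gauge_variation e1 e2 X U1 U2 :
  regularMx X -> derivableMx U1 -> derivableMx U2 -> zero_curvature e1 e2 U1 U2 ->
  forall a b, DD e2 (gauge_variation e1 X U1) a b - DD e1 (gauge_variation e2 X U2) a b
    + comm (gauge_variation e1 X U1 a b) (U2 a b)
    + comm (U1 a b) (gauge_variation e2 X U2 a b) = 0.
Proof.
move=> rX dU1 dU2 zc a b; have dX := regularMx_derivableMx rX.
rewrite /gauge_variation.
rewrite (DDD e2 (regularMx_derivableMx_DD e1 rX) (derivableMx_comm dX dU1)).
rewrite (DDD e1 (regularMx_derivableMx_DD e2 rX) (derivableMx_comm dX dU2)).
rewrite (DD_commutator e2 dX dU1) (DD_commutator e1 dX dU2) (DD_comm e2 e1 rX) /=.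
rewrite (zero_curvature_DD (zero_curvature_sym zc)).
move: (DD e1 (DD e2 X) a b) (DD e1 X a b) (DD e2 X a b) (DD e1 U2 a b) (X a b) (U1 a b)
  (U2 a b) => Y P Q Z x u1 u2.
rewrite (commDr Z (comm u2 u1) x) (jacobi x u2 u1).
rewrite (comm_swap u1 (comm x u2)) (comm_swap (comm x u1) u2).
rewrite (commDl P (comm x u1) u2) (commDr Q (comm x u2) u1) (comm_swap Q u1).
move: (comm Q u1) (comm x Z) (comm P u2) (comm (comm x u1) u2) (comm u1 (comm x u2)).
by move=> k1 k2 k3 k4 k5; apply/matrixP => i j; rewrite !mxE; ring.
Qed.

Lemma regularMx_lax (c e : C) th : smoothM th -> regularMx (lax c e th).
Proof.
move=> sth; apply: regularMxZ (regularC_cst c) _.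
exact: regularMx_comm (smoothM_regularMx_DD e sth) (smoothM_regularMx sth).
Qed.

Lemma lax_variation_conformal (c e1 e2 : C) th f g :
  smoothM th -> derivableC f -> derivableC g -> (forall a b, DDc e1 g a b = 0) ->
  forall a b,
    lax_variation c e1 th (fun a b => f a b *: DD e1 th a b + g a b *: DD e2 th a b) a b =
    DDc e1 f a b *: lax c e1 th a b + f a b *: DD e1 (lax c e1 th) a b
    + g a b *: DD e2 (lax c e1 th) a b.
Proof.
move=> sth df dg g1 a b.
have rT := smoothM_regularMx sth; have dT := regularMx_derivableMx rT.
have dT1 := regularMx_derivableMx_DD e1 rT; have dT2 := regularMx_derivableMx_DD e2 rT.
rewrite /lax_variation (DDD e1 (derivableMxZ df dT1) (derivableMxZ dg dT2)) /=.
rewrite (DDZ e1 df dT1) (DDZ e1 dg dT2) /= g1 (DD_comm e1 e2 rT).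
rewrite /lax (DDZc e1 c (derivableMx_comm dT1 dT)) (DDZc e2 c (derivableMx_comm dT1 dT)) /=.
rewrite (DD_commutator e1 dT1 dT) (DD_commutator e2 dT1 dT) /=.
move: (DDc e1 f a b) (f a b) (g a b) (th a b) (DD e1 th a b) (DD e2 th a b)
  (DD e1 (DD e1 th) a b) (DD e2 (DD e1 th) a b) => f' x y T T1 T2 T11 T21.
rewrite scale0r add0r (commDl (f' *: T1 + x *: T11) (y *: T21) T).
rewrite (commDl (f' *: T1) (x *: T11) T) (commDr (x *: T1) (y *: T2) T1) !commZl !commZr.
rewrite comm_self; move: (comm T1 T) (comm T11 T) (comm T21 T) (comm T1 T2).
by move=> k1 k2 k3 k4; apply/matrixP => i j; rewrite !mxE; ring.
Qed.

Lemma gauge_variation_conformal e1 e2 U1 U2 f g :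
  derivableMx U1 -> derivableMx U2 -> derivableC f -> derivableC g ->
  (forall a b, DDc e1 g a b = 0) -> zero_curvature e1 e2 U1 U2 ->
  forall a b, gauge_variation e1 (fun a b => f a b *: U1 a b + g a b *: U2 a b) U1 a b =
    DDc e1 f a b *: U1 a b + f a b *: DD e1 U1 a b + g a b *: DD e2 U1 a b.
Proof.
move=> dU1 dU2 df dg g1 zc a b.
rewrite /gauge_variation (DDD e1 (derivableMxZ df dU1) (derivableMxZ dg dU2)) /=.
rewrite (DDZ e1 df dU1) (DDZ e1 dg dU2) /= g1 (zero_curvature_DD zc).
move: (DDc e1 f a b) (f a b) (g a b) (U1 a b) (U2 a b) (DD e1 U1 a b) (DD e2 U1 a b).
move=> f' x y u1 u2 D1u1 D2u1.
rewrite (commDl (x *: u1) (y *: u2) u1) !commZl comm_self (comm_swap u1 u2).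
by move: (comm u1 u2) => k; apply/matrixP => i j; rewrite !mxE; ring.
Qed.

Lemma su_conj_unitary (P X : M) :
  hadj P *m P = 1%:M -> X \in su n -> invmx P *m (X *m P) \in su n.
Proof.
move=> uP /andP[/eqP antiX /eqP trX]; have [_ unitP] := mulmx1_unit uP.
rewrite (unitary_invmx uP); apply/andP; split; apply/eqP.
  by rewrite !hadjM hadjK antiX mulmxN mulNmx mulmxA.
by rewrite mxtrace_mulC -mulmxA -(unitary_invmx uP) mulmxV // mulmx1 trX.
Qed.

Lemma su_real_comb (x y : C) (A B : M) : x \is Num.real -> y \is Num.real ->
  A \in su n -> B \in su n -> x *: A + y *: B \in su n.
Proof.
move=> rx ry /andP[/eqP antiA /eqP trA] /andP[/eqP antiB /eqP trB].
apply/andP; split; apply/eqP; last by rewrite mxtraceD !mxtraceZ trA trB !mulr0 addr0.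
by rewrite hadjD !hadjZ antiA antiB (conj_Creal rx) (conj_Creal ry) !scalerN opprD.
Qed.

Lemma su_conj_comb (x : C) (A B : M) : hadj A = - B -> \tr A = 0 -> \tr B = 0 ->
  x *: A + Num.conj x *: B \in su n.
Proof.
move=> adjA trA trB; have adjB : hadj B = - A by rewrite -[B]opprK -adjA hadjN hadjK.
apply/andP; split; apply/eqP; last by rewrite mxtraceD !mxtraceZ trA trB !mulr0 addr0.
by rewrite hadjD !hadjZ adjA adjB conjCK !scalerN opprD addrC.
Qed.

End LaxPair.

(** * The conformal symmetry of the CP^(N-1) model *)

Section ConformalSymmetry.
Variable R : realType.
Local Notation C := R[i].
Variables (n : nat) (s : setting) (lam : C) (th : R -> R -> 'M[C]_n) (f g : R -> R -> C).
Local Notation e1 := (coef R s).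
Local Notation e2 := (- coef R s).
Local Notation c1 := (-2 / (1 + lam)).
Local Notation c2 := (-2 / (1 - lam)).

Lemma u1E : u1 s lam th = lax c1 e1 th.
Proof. by rewrite /u1 /lax D1_DD. Qed.

Lemma u2E : u2 s lam th = lax c2 e2 th.
Proof. by rewrite /u2 /lax D2_DD. Qed.

Lemma fu_guE :
  fu_gu s lam f g th = fun a b => f a b *: lax c1 e1 th a b + g a b *: lax c2 e2 th a b.
Proof. by rewrite /fu_gu u1E u2E. Qed.

Lemma prwC_u1E : prwC_u1 s lam f g th =
  lax_variation c1 e1 th (fun a b => f a b *: DD e1 th a b + g a b *: DD e2 th a b).
Proof. by rewrite /prwC_u1 /charQ /lax_variation !D1_DD D2_DD. Qed.

Lemma prwC_u2E : prwC_u2 s lam f g th =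
  lax_variation c2 e2 th (fun a b => g a b *: DD e2 th a b + f a b *: DD e1 th a b).
Proof.
have -> : (fun a b => g a b *: DD e2 th a b + f a b *: DD e1 th a b) = charQ s f g th.
  by apply: funext2 => a b; rewrite /charQ D1_DD D2_DD addrC.
by rewrite /prwC_u2 /lax_variation !D2_DD.
Qed.

Lemma regularMx_fu_gu : smoothM th -> smoothC f -> smoothC g -> regularMx (fu_gu s lam f g th).
Proof.
move=> sth sf sg; rewrite fu_guE.
exact: regularMxD (regularMxZ (smoothC_regularC sf) (regularMx_lax c1 e1 sth))
  (regularMxZ (smoothC_regularC sg) (regularMx_lax c2 e2 sth)).
Qed.

Lemma prwC_u1_gauge_variation : smoothM th -> smoothC f -> smoothC g ->
  (forall a b, D1c s g a b = 0) -> zero_curvature e1 e2 (u1 s lam th) (u2 s lam th) ->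
  prwC_u1 s lam f g th = gauge_variation e1 (fu_gu s lam f g th) (u1 s lam th).
Proof.
move=> sth sf sg g_hol zc; rewrite D1c_DDc in g_hol; rewrite u1E u2E in zc.
have [df dg] := (regularC_derivableC (smoothC_regularC sf),
  regularC_derivableC (smoothC_regularC sg)).
have [dU1 dU2] := (regularMx_derivableMx (regularMx_lax c1 e1 sth),
  regularMx_derivableMx (regularMx_lax c2 e2 sth)).
apply: funext2 => a b; rewrite prwC_u1E fu_guE u1E.
by rewrite (lax_variation_conformal _ _ sth df dg g_hol)
  (gauge_variation_conformal dU1 dU2 df dg g_hol zc).
Qed.

Lemma prwC_u2_gauge_variation : smoothM th -> smoothC f -> smoothC g ->
  (forall a b, D2c s f a b = 0) -> zero_curvature e1 e2 (u1 s lam th) (u2 s lam th) ->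
  prwC_u2 s lam f g th = gauge_variation e2 (fu_gu s lam f g th) (u2 s lam th).
Proof.
move=> sth sf sg f_hol zc; rewrite D2c_DDc in f_hol.
rewrite u1E u2E in zc; have {}zc := zero_curvature_sym zc.
have [df dg] := (regularC_derivableC (smoothC_regularC sf),
  regularC_derivableC (smoothC_regularC sg)).
have [dU1 dU2] := (regularMx_derivableMx (regularMx_lax c1 e1 sth),
  regularMx_derivableMx (regularMx_lax c2 e2 sth)).
have -> : fu_gu s lam f g th =
    fun a b => g a b *: lax c2 e2 th a b + f a b *: lax c1 e1 th a b.
  by rewrite fu_guE; apply: funext2 => a b; exact: addrC.
apply: funext2 => a b; rewrite prwC_u2E u2E.
by rewrite (lax_variation_conformal _ _ sth dg df f_hol)
  (gauge_variation_conformal dU2 dU1 dg df f_hol zc).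
Qed.

Lemma fu_gu_su : lsp_reality s lam th -> fg_reality s f g ->
  forall a b, fu_gu s lam f g th a b \in su n.
Proof.
move=> real real_fg a b.
have tr1 : \tr (u1 s lam th a b) = 0 by rewrite mxtraceZ mxtrace_comm mulr0.
have tr2 : \tr (u2 s lam th a b) = 0 by rewrite mxtraceZ mxtrace_comm mulr0.
move: tr1 tr2 real real_fg; case: s => /= tr1 tr2 real real_fg.
  have [su1 su2] := real a b; have [r1 r2] := real_fg a b.
  exact: su_real_comb r1 r2 su1 su2.
by rewrite /fu_gu real_fg; exact: su_conj_comb (real a b) tr1 tr2.
Qed.

End ConformalSymmetry.

Unset Implicit Arguments.
Set Strict Implicit.

Theorem proposition4 (R : realType) (N : nat) (s : setting)
  (theta : R -> R -> 'M[R[i]]_N) (lam : R[i])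
  (Phi : R -> R -> 'M[R[i]]_N) (f g : R -> R -> R[i]) :
  (* theta : smooth su(N)-valued, P = E - i theta rank-one Hermitian projector *)
  smoothM theta ->
  (forall a b, theta a b \in su N) ->
  (forall a b, rank_one_hermitian_projector (projP (theta a b))) ->
  (* Euler-Lagrange equations [theta_12, theta] = 0 *)
  (forall a b, comm (D2 s (D1 s theta) a b) (theta a b) = 0) ->
  (* spectral parameter and reality of the LSP in the chosen setting *)
  lam != 1 -> lam != -1 ->
  lsp_reality s lam theta ->
  (* Phi in SU(N) solves the LSP  D_alpha Phi = u^alpha Phi *)
  smoothM Phi ->
  (forall a b, Phi a b \in SU N) ->
  (forall a b, D1 s Phi a b = u1 s lam theta a b *m Phi a b) ->
  (forall a b, D2 s Phi a b = u2 s lam theta a b *m Phi a b) ->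
  (* f = f(x^1), g = g(x^2), with the reality conditions of the setting *)
  smoothC f -> smoothC g ->
  (forall a b, D2c s f a b = 0) -> (forall a b, D1c s g a b = 0) ->
  fg_reality s f g ->
  (* (i) tangent vectors of the immersion function F *)
  (forall a b, D1 s (immersionF s lam f g theta Phi) a b
               = invmx (Phi a b) *m prwC_u1 s lam f g theta a b *m Phi a b) /\
  (forall a b, D2 s (immersionF s lam f g theta Phi) a b
               = invmx (Phi a b) *m prwC_u2 s lam f g theta a b *m Phi a b) /\
  (* (ii) (f u^1 + g u^2) Phi = Phi F, and the deformation is a symmetry *)
  (forall a b, fu_gu s lam f g theta a b *m Phi a b
               = Phi a b *m immersionF s lam f g theta Phi a b) /\
  is_LSP_symmetry s (u1 s lam theta) (u2 s lam theta) Phi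
    (prwC_u1 s lam f g theta) (prwC_u2 s lam f g theta)
    (fun a b => fu_gu s lam f g theta a b *m Phi a b).
Proof.
move=> sth _ _ _ _ _ real sPhi PhiSU lsp1 lsp2 sf sg f_hol g_hol real_fg.
have uPhi a b : hadj (Phi a b) *m Phi a b = 1%:M by case/andP: (PhiSU a b) => /eqP.
have unitPhi a b : Phi a b \in unitmx by case: (mulmx1_unit (uPhi a b)).
have rPhi := smoothM_regularMx sPhi; have dPhi := regularMx_derivableMx rPhi.
have rX := regularMx_fu_gu s lam sth sf sg; have dX := regularMx_derivableMx rX.
have dU1 : derivableMx (u1 s lam theta).
  by rewrite u1E; exact: regularMx_derivableMx (regularMx_lax _ _ sth).
have dU2 : derivableMx (u2 s lam theta).
  by rewrite u2E; exact: regularMx_derivableMx (regularMx_lax _ _ sth).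
rewrite D1_DD in lsp1; rewrite D2_DD in lsp2.
have zc := lsp_zero_curvature rPhi dU1 dU2 unitPhi lsp1 lsp2.
have FE : immersionF s lam f g theta Phi =
    fun a b => hadj (Phi a b) *m fu_gu s lam f g theta a b *m Phi a b.
  by apply: funext2 => a b; rewrite /immersionF (unitary_invmx (uPhi a b)).
rewrite /is_LSP_symmetry FE !D1_DD !D2_DD.
rewrite (prwC_u1_gauge_variation sth sf sg g_hol zc).
rewrite (prwC_u2_gauge_variation sth sf sg f_hol zc).
split; [|split; [|split; [|split; [|split; [|split]]]]].
- by move=> a b; rewrite (unitary_invmx (uPhi a b)); exact: DD_conj_unitary.
- by move=> a b; rewrite (unitary_invmx (uPhi a b)); exact: DD_conj_unitary.
- move=> a b; move: (fu_gu s lam f g theta a b) => X.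
  by rewrite -(unitary_invmx (uPhi a b)) !mulmxA mulmxV // mul1mx.
- exact: zero_curvature_gauge_variation.
- by move=> a b; exact: su_conj_unitary (uPhi a b) (fu_gu_su real real_fg a b).
- exact: DD_mulmx_lsp.
- exact: DD_mulmx_lsp.
Qed.
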